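(* Let $N\ge 1$, let $\mathbf{a}_1,\dots,\mathbf{a}_N\in\mathbb{R}^3$ (base station positions, $\mathbf{a}_i=(a_i,b_i,c_i)$) and $\mathbf{x}_G\in\mathbb{R}^3$, and set $d_i=\|\mathbf{x}_G-\mathbf{a}_i\|$. Define $$F_2(\mathbf{x})=\frac14\sum_{i=1}^N\bigl(\|\mathbf{x}-\mathbf{a}_i\|^2-d_i^2\bigr)^2,\qquad F_{L2}(\mathbf{x},\lambda)=\frac14\sum_{i=1}^N\bigl(\|\mathbf{x}-\mathbf{a}_i\|^2+\lambda^2-d_i^2\bigr)^2$$ for $\mathbf{x}\in\mathbb{R}^3$, $\lambda\in\mathbb{R}$. Assume $\mathbf{x}_G$ is the unique global minimizer of $F_2$, and let $\mathbf{x}_L\ne\mathbf{x}_G$ be a local minimizer of $F_2$ at which $\nabla F_2(\mathbf{x}_L)=0$ and the second partial derivatives $\partial^2F_2/\partial x^2,\ \partial^2F_2/\partial y^2,\ \partial^2F_2/\partial z^2$ are positive. Then $(\mathbf{x}_L,0)$ is a saddle point of $F_{L2}$: namely $\nabla_{\mathbf{x}}F_{L2}(\mathbf{x}_L,0)=0$, $\frac{\partial F_{L2}}{\partial\lambda}(\mathbf{x}_L,0)=0$, $\frac{\partial^2F_{L2}}{\partial x\,\partial\lambda}(\mathbf{x}_L,0)=\frac{\partial^2F_{L2}}{\partial y\,\partial\lambda}(\mathbf{x}_L,0)=\frac{\partial^2F_{L2}}{\partial z\,\partial\lambda}(\mathbf{x}_L,0)=0$, the second derivatives of $F_{L2}$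 in $x,y,z$ at $(\mathbf{x}_L,0)$ are positive, and $\frac{\partial^2F_{L2}}{\partial\lambda^2}(\mathbf{x}_L,0)<0$.
   Context: This models Time of Arrival localization with exact distance measurements $d_i$ from known base stations $\mathbf{a}_i$ to an object at $\mathbf{x}_G$; $F_{L2}$ is the objective $F_2$ augmented by an additional variable $\lambda$. Note $F_{L2}(\mathbf{x},0)=F_2(\mathbf{x})$ and $F_2(\mathbf{x}_G)=0$. *)

From Stdlib Require Import Reals.
From Coquelicot Require Import Coquelicot.
Open Scope R_scope.

(* Base stations a_i = (a i, b i, c i), i = 0..N-1; point x = (x, y, z). *)

Definition sqdist (x y z p q r : R) : R := (x - p)^2 + (y - q)^2 + (z - r)^2.

Definition sumN (N : nat) (f : nat -> R) : R := sum_f_R0 f (pred N).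

Definition dist_i (a b c : nat -> R) (xg yg zg : R) (i : nat) : R :=
  sqrt (sqdist xg yg zg (a i) (b i) (c i)).

Definition F2 (N : nat) (a b c : nat -> R) (xg yg zg : R) (x y z : R) : R :=
  / 4 * sumN N (fun i =>
     (sqdist x y z (a i) (b i) (c i) - (dist_i a b c xg yg zg i)^2)^2).

Definition FL2 (N : nat) (a b c : nat -> R) (xg yg zg : R) (x y z l : R) : R :=
  / 4 * sumN N (fun i =>
     (sqdist x y z (a i) (b i) (c i) + l^2 - (dist_i a b c xg yg zg i)^2)^2).

(* With the residuals D_i(x) = |x - a_i|^2 - d_i^2 one has
   F_L2(x, l) = 1/4 sum_i (D_i(x) + l^2)^2, so F_L2 is even in l: at l = 0 its
   x-derivatives are those of F_2, the mixed derivatives carry a factor l, and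
   d^2 F_L2 / d l^2 (x, 0) = sum_i D_i(x).  Writing u = x - x_G, the identity
   D_i(x) = 2 u.(x - a_i) - |u|^2 and criticality,
   grad F_2(x_L) = sum_i D_i(x_L) (x_L - a_i) = 0, give
   sum_i D_i(x_L)^2 = - |u|^2 sum_i D_i(x_L).  The left side is 4 F_2(x_L) > 0
   because x_G is the unique minimizer and F_2(x_G) = 0; hence sum_i D_i(x_L) < 0. *)

From Stdlib Require Import Reals Lra Psatz FunctionalExtensionality.
From Coquelicot Require Import Coquelicot.
Open Scope R_scope.

Lemma sumN_ext (N : nat) (f g : nat -> R) :
  (forall i, f i = g i) -> sumN N f = sumN N g.
Proof. intros Hfg. apply sum_eq. intros i _. apply Hfg. Qed.

Lemma sumN_0 (N : nat) : sumN N (fun _ => 0) = 0.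
Proof. unfold sumN. rewrite sum_cte. ring. Qed.

Lemma is_derive_sumN (N : nat) (g : nat -> R -> R) (g' : nat -> R) (x : R) :
  (forall i, is_derive (g i) x (g' i)) ->
  is_derive (fun t => sumN N (fun i => g i t)) x (sumN N g').
Proof.
  intros Hg. unfold sumN. induction (pred N) as [|n IH]; simpl.
  - apply Hg.
  - apply (is_derive_plus (fun t => sum_f_R0 (fun i => g i t) n) (g (S n))); auto.
Qed.

Lemma is_derive_quarter_sumN (N : nat) (g : nat -> R -> R) (g' : nat -> R) (x : R) :
  (forall i, is_derive (g i) x (4 * g' i)) ->
  is_derive (fun t => / 4 * sumN N (fun i => g i t)) x (sumN N g').
Proof.
  intros Hg.
  replace (sumN N g') with (/ 4 * sumN N (fun i => 4 * g' i)).
  - apply is_derive_scal, is_derive_sumN, Hg.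
  - unfold sumN. rewrite scal_sum. apply sum_eq. intros i _. field.
Qed.

Lemma Derive_sumN_add_sq_0 (N : nat) (k w : nat -> R) :
  Derive (fun l => sumN N (fun i => (k i + l ^ 2) * w i)) 0 = 0.
Proof.
  rewrite <- (sumN_0 N) at 2. apply is_derive_unique, is_derive_sumN.
  intros i. auto_derive; [trivial | ring].
Qed.

Lemma Derive_mul_sumN_add_sq_0 (N : nat) (k : nat -> R) :
  Derive (fun s => s * sumN N (fun i => k i + s ^ 2)) 0 = sumN N k.
Proof.
  apply is_derive_unique.
  replace (sumN N k) with (1 * sumN N (fun i => k i + 0 ^ 2) + 0 * sumN N (fun i => 2 * 0)).
  - apply (is_derive_mult (fun s => s) (fun s => sumN N (fun i => k i + s ^ 2))).
    + auto_derive; auto.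
    + apply is_derive_sumN. intros i. auto_derive; [trivial | ring].
    + intros; apply Rmult_comm.
  - rewrite Rmult_0_l, Rplus_0_r, Rmult_1_l.
    apply sumN_ext. intros i. ring.
Qed.

Lemma sqdist_nonneg (x y z p q r : R) : 0 <= sqdist x y z p q r.
Proof. unfold sqdist. repeat apply Rplus_le_le_0_compat; apply pow2_ge_0. Qed.

Lemma sqdist_pos (x y z p q r : R) : (x, y, z) <> (p, q, r) -> 0 < sqdist x y z p q r.
Proof.
  intros Hne. apply Rnot_le_lt. intros Hle. apply Hne. unfold sqdist in Hle.
  pose proof (pow2_ge_0 (x - p)); pose proof (pow2_ge_0 (y - q)); pose proof (pow2_ge_0 (z - r)).
  f_equal; [f_equal |]; nra.
Qed.

Section Localization.

Variables (N : nat) (a b c : nat -> R) (xg yg zg : R).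

Definition residual (x y z : R) (i : nat) : R :=
  sqdist x y z (a i) (b i) (c i) - dist_i a b c xg yg zg i ^ 2.

Lemma residual_expand (x y z : R) (i : nat) :
  residual x y z i =
  2 * ((x - xg) * (x - a i) + (y - yg) * (y - b i) + (z - zg) * (z - c i))
  - sqdist x y z xg yg zg.
Proof.
  unfold residual, dist_i. rewrite pow2_sqrt by apply sqdist_nonneg.
  unfold sqdist. ring.
Qed.

Lemma F2_residual (x y z : R) :
  F2 N a b c xg yg zg x y z = / 4 * sumN N (fun i => residual x y z i ^ 2).
Proof. reflexivity. Qed.

Lemma F2_xg : F2 N a b c xg yg zg xg yg zg = 0.
Proof.
  rewrite F2_residual, <- (Rmult_0_r (/ 4)), <- (sumN_0 N).
  f_equal. apply sumN_ext. intros i.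
  rewrite residual_expand. unfold sqdist. ring.
Qed.

Lemma FL2_at_0 : (fun x y z => FL2 N a b c xg yg zg x y z 0) = F2 N a b c xg yg zg.
Proof.
  do 3 (apply functional_extensionality; intro).
  unfold FL2, F2. f_equal. apply sumN_ext. intros i. ring.
Qed.

Lemma Derive_F2_x (x y z : R) :
  Derive (fun t => F2 N a b c xg yg zg t y z) x
  = sumN N (fun i => residual x y z i * (x - a i)).
Proof.
  apply is_derive_unique, is_derive_quarter_sumN. intros i.
  unfold residual, sqdist. auto_derive; [trivial | ring].
Qed.

Lemma Derive_F2_y (x y z : R) :
  Derive (fun t => F2 N a b c xg yg zg x t z) y
  = sumN N (fun i => residual x y z i * (y - b i)).
Proof.
  apply is_derive_unique, is_derive_quarter_sumN. intros i.
  unfold residual, sqdist. auto_derive; [trivial | ring].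
Qed.

Lemma Derive_F2_z (x y z : R) :
  Derive (fun t => F2 N a b c xg yg zg x y t) z
  = sumN N (fun i => residual x y z i * (z - c i)).
Proof.
  apply is_derive_unique, is_derive_quarter_sumN. intros i.
  unfold residual, sqdist. auto_derive; [trivial | ring].
Qed.

Lemma Derive_FL2_x (x y z l : R) :
  Derive (fun t => FL2 N a b c xg yg zg t y z l) x
  = sumN N (fun i => (residual x y z i + l ^ 2) * (x - a i)).
Proof.
  apply is_derive_unique, is_derive_quarter_sumN. intros i.
  unfold residual, sqdist. auto_derive; [trivial | ring].
Qed.

Lemma Derive_FL2_y (x y z l : R) :
  Derive (fun t => FL2 N a b c xg yg zg x t z l) y
  = sumN N (fun i => (residual x y z i + l ^ 2) * (y - b i)).
Proof.
  apply is_derive_unique, is_derive_quarter_sumN. intros i.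
  unfold residual, sqdist. auto_derive; [trivial | ring].
Qed.

Lemma Derive_FL2_z (x y z l : R) :
  Derive (fun t => FL2 N a b c xg yg zg x y t l) z
  = sumN N (fun i => (residual x y z i + l ^ 2) * (z - c i)).
Proof.
  apply is_derive_unique, is_derive_quarter_sumN. intros i.
  unfold residual, sqdist. auto_derive; [trivial | ring].
Qed.

Lemma Derive_FL2_l (x y z l : R) :
  Derive (fun s => FL2 N a b c xg yg zg x y z s) l
  = l * sumN N (fun i => residual x y z i + l ^ 2).
Proof.
  apply is_derive_unique. unfold sumN. rewrite scal_sum.
  apply is_derive_quarter_sumN. intros i.
  unfold residual. auto_derive; [trivial | ring].
Qed.

Lemma sum_residual_sq_critical (x y z : R) :
  sumN N (fun i => residual x y z i * (x - a i)) = 0 ->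
  sumN N (fun i => residual x y z i * (y - b i)) = 0 ->
  sumN N (fun i => residual x y z i * (z - c i)) = 0 ->
  sumN N (fun i => residual x y z i ^ 2)
  = - sqdist x y z xg yg zg * sumN N (residual x y z).
Proof.
  intros Sx Sy Sz.
  rewrite (sumN_ext N _ (fun i =>
      residual x y z i * (x - a i) * (2 * (x - xg))
    + residual x y z i * (y - b i) * (2 * (y - yg))
    + residual x y z i * (z - c i) * (2 * (z - zg))
    - residual x y z i * sqdist x y z xg yg zg)).
  - unfold sumN in *. rewrite minus_sum, !sum_plus, <- !scal_sum, Sx, Sy, Sz. ring.
  - intros i. rewrite residual_expand. ring.
Qed.

Lemma sum_residual_neg (x y z : R) :
  (x, y, z) <> (xg, yg, zg) ->
  F2 N a b c xg yg zg xg yg zg < F2 N a b c xg yg zg x y z ->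
  Derive (fun t => F2 N a b c xg yg zg t y z) x = 0 ->
  Derive (fun t => F2 N a b c xg yg zg x t z) y = 0 ->
  Derive (fun t => F2 N a b c xg yg zg x y t) z = 0 ->
  sumN N (residual x y z) < 0.
Proof.
  intros Hne Hlt Gx Gy Gz.
  rewrite Derive_F2_x in Gx; rewrite Derive_F2_y in Gy; rewrite Derive_F2_z in Gz.
  rewrite F2_xg, F2_residual, sum_residual_sq_critical in Hlt by assumption.
  pose proof (sqdist_pos x y z xg yg zg Hne).
  nra.
Qed.

End Localization.

Theorem mainTheorem1 (N : nat) (a b c : nat -> R) (xg yg zg xl yl zl : R) :
  (1 <= N)%nat ->
  (* x_G is the unique global minimizer of F2 *)
  (forall x y z, (x, y, z) <> (xg, yg, zg) ->
     F2 N a b c xg yg zg xg yg zg < F2 N a b c xg yg zg x y z) ->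
  (* x_L <> x_G *)
  (xl, yl, zl) <> (xg, yg, zg) ->
  (* x_L is a local minimizer of F2 *)
  (exists eps : R, 0 < eps /\
     forall x y z, sqrt (sqdist x y z xl yl zl) < eps ->
       F2 N a b c xg yg zg xl yl zl <= F2 N a b c xg yg zg x y z) ->
  (* grad F2 (x_L) = 0 *)
  Derive (fun t => F2 N a b c xg yg zg t yl zl) xl = 0 ->
  Derive (fun t => F2 N a b c xg yg zg xl t zl) yl = 0 ->
  Derive (fun t => F2 N a b c xg yg zg xl yl t) zl = 0 ->
  (* pure second partials of F2 at x_L are positive *)
  0 < Derive (fun s => Derive (fun t => F2 N a b c xg yg zg t yl zl) s) xl ->
  0 < Derive (fun s => Derive (fun t => F2 N a b c xg yg zg xl t zl) s) yl ->
  0 < Derive (fun s => Derive (fun t => F2 N a b c xg yg zg xl yl t) s) zl ->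
  (* conclusion: (x_L, 0) is a saddle point of FL2 *)
  Derive (fun t => FL2 N a b c xg yg zg t yl zl 0) xl = 0 /\
  Derive (fun t => FL2 N a b c xg yg zg xl t zl 0) yl = 0 /\
  Derive (fun t => FL2 N a b c xg yg zg xl yl t 0) zl = 0 /\
  Derive (fun l => FL2 N a b c xg yg zg xl yl zl l) 0 = 0 /\
  Derive (fun l => Derive (fun t => FL2 N a b c xg yg zg t yl zl l) xl) 0 = 0 /\
  Derive (fun l => Derive (fun t => FL2 N a b c xg yg zg xl t zl l) yl) 0 = 0 /\
  Derive (fun l => Derive (fun t => FL2 N a b c xg yg zg xl yl t l) zl) 0 = 0 /\
  0 < Derive (fun s => Derive (fun t => FL2 N a b c xg yg zg t yl zl 0) s) xl /\
  0 < Derive (fun s => Derive (fun t => FL2 N a b c xg yg zg xl t zl 0) s) yl /\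
  0 < Derive (fun s => Derive (fun t => FL2 N a b c xg yg zg xl yl t 0) s) zl /\
  Derive (fun s => Derive (fun l => FL2 N a b c xg yg zg xl yl zl l) s) 0 < 0.
Proof.
  intros _ Hmin Hne _ Gx Gy Gz Hx Hy Hz.
  assert (Hneg := sum_residual_neg N a b c xg yg zg xl yl zl Hne (Hmin _ _ _ Hne) Gx Gy Gz).
  rewrite <- FL2_at_0 in Gx, Gy, Gz, Hx, Hy, Hz. cbv beta in Gx, Gy, Gz, Hx, Hy, Hz.
  repeat split; try assumption.
  - rewrite Derive_FL2_l. ring.
  - rewrite (Derive_ext _ _ _ (Derive_FL2_x N a b c xg yg zg xl yl zl)).
    apply Derive_sumN_add_sq_0.
  - rewrite (Derive_ext _ _ _ (Derive_FL2_y N a b c xg yg zg xl yl zl)).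
    apply Derive_sumN_add_sq_0.
  - rewrite (Derive_ext _ _ _ (Derive_FL2_z N a b c xg yg zg xl yl zl)).
    apply Derive_sumN_add_sq_0.
  - rewrite (Derive_ext _ _ _ (Derive_FL2_l N a b c xg yg zg xl yl zl)).
    now rewrite Derive_mul_sumN_add_sq_0.
Qed.
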